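(* In the lower-bound instance for CTS-G described in the context, for any round $t$ and any optimal base arm $a\in\bar G_t$, we have $\Pr(w_{a,t}<\tau\mid\mathcal{F}_{t-1})\ge0.5$, where $\tau:=\Delta+\Delta/4$.
   Context: Top-$m$ instance: $N$ base arms with $N\ge400m$, $m\ge1$; every round any $m$ of the $N$ arms may be played. A set $G\subset[N]$ with $|G|=m$ is fixed; rewards are deterministic: $r_a=\Delta$ for $a\in G$ and $r_a=0$ otherwise, with $\Delta:=\frac45\sqrt{\frac{N\ln T}{T}}$ and $T>\frac{16}{25}N\ln T$. The agent runs CTS-G with $\gamma=1$: in round $t$ draw independently $w_{a,t}\sim\mathcal{N}\big(\hat r_{a,n_{a,t}},\frac{m\ln t}{n_{a,t}+1}\big)$ and play the $m$ arms with largest $w_{a,t}$; $n_{a,t}$ is the number of plays of $a$ in rounds $1,\dots,t-1$, $\hat r_{a,n_{a,t}}$ its empirical mean ($0$ if unplayed). $\mathcal{F}_{t-1}$ is the history up to the end of round $t-1$. $H:=\lceil64m\ln T/\Delta^2\rceil$ and $\bar G_t:=\{a\in G: n_{a,t}\ge H\}$. *)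

From HB Require Import structures.
From mathcomp Require Import all_boot all_order all_algebra.
From mathcomp Require Import all_classical all_reals all_analysis.
From mathcomp Require Import normal_distribution.
Set Implicit Arguments. Unset Strict Implicit. Unset Printing Implicit Defensive.
Import Order.TTheory GRing.Theory Num.Theory.
Local Open Scope ring_scope.

Section CTSG.
Variable R : realType.

Definition gapDelta (N T : nat) : R :=
  4 / 5 * Num.sqrt (N%:R * ln (T%:R : R) / T%:R).

Definition reward (N : nat) (G : {set 'I_N}) (Delta : R) (a : 'I_N) : R :=
  if a \in G then Delta else 0.

Definition Hthr (m T : nat) (Delta : R) : int :=
  Num.ceil (64 * m%:R * ln (T%:R : R) / Delta ^+ 2).

(* A history up to the end of round t-1: S s is the set of m arms played in
   round s (s = 1, ..., t-1). *)
Definition nplays (N : nat) (S : nat -> {set 'I_N}) (a : 'I_N) (t : nat) : nat :=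
  \sum_(1 <= s < t) (a \in S s).

(* Empirical mean of the observed rewards of a before round t (0 if unplayed,
   since x / 0 = 0). *)
Definition emp_mean (N : nat) (r : 'I_N -> R) (S : nat -> {set 'I_N})
  (a : 'I_N) (t : nat) : R :=
  (\sum_(1 <= s < t | a \in S s) r a) / (nplays S a t)%:R.

(* CTS-G with gamma = 1: conditional law of w_{a,t} given F_{t-1} is
   N(emp_mean, m ln t / (n_{a,t} + 1)); normal_prob takes the standard deviation. *)
Definition ctsg_sample_law (N m : nat) (r : 'I_N -> R) (S : nat -> {set 'I_N})
  (a : 'I_N) (t : nat) : set R -> \bar R :=
  normal_prob (emp_mean r S a t)
    (Num.sqrt (m%:R * ln (t%:R : R) / (nplays S a t).+1%:R)).

End CTSG.

From HB Require Import structures.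
From mathcomp Require Import all_boot all_order all_algebra.
From mathcomp Require Import all_classical all_reals all_analysis.
From mathcomp Require Import normal_distribution.
From mathcomp Require Import ring lra zify measurable_realfun.
Import Order.TTheory GRing.Theory Num.Theory.
Local Open Scope ring_scope.

(* Given the history, w_{a,t} is Gaussian with mean the empirical mean of a,
   which is exactly Delta once a has been played at all, since rewards are
   deterministic.  The threshold H is positive, so an arm of G-bar_t has been
   played, hence t >= 2 and the standard deviation sqrt (m ln t / (n + 1)) is
   positive (with standard deviation 0 the library's normal law is a junk
   uniform law on [0, 1]).  A non-degenerate Gaussian is symmetric under the
   reflection x |-> 2 mu - x, so it puts mass exactly 1/2 below its mean, hence
   at least 1/2 below tau = 5/4 Delta >= Delta. *)

Section normal_half.
Context {R : realType} (m s : R).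
Hypothesis s0 : s != 0.

Lemma normal_pdf_reflect x : normal_pdf m s (m * 2 - x) = normal_pdf m s x.
Proof.
rewrite /normal_pdf (negbTE s0) /normal_fun.
by rewrite (_ : m * 2 - x - m = - (x - m)) ?sqrrN //; ring.
Qed.

Lemma normal_prob_itvNyc_itvcy :
  normal_prob m s `]-oo, m] = normal_prob m s `[m, +oo[.
Proof.
have reflK : m * 2 - m = m by rewrite mulr2n mulrDr mulr1 addrK.
have dreflect : (fun x : R => m * 2 - x)^`()%classic = cst (-1).
  by apply/funext => x; rewrite derive1E deriveB// derive_cst derive_id sub0r.
have := @decreasing_ge0_integration_by_substitutiony R (fun x => m * 2 - x)
  (normal_pdf m s) m.
rewrite reflK dreflect /normal_prob => ->; last 8 first.
- by move=> x y _ _ xy; rewrite ltrD2l ltrN2.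
- by move=> ? _; exact: cvg_cst.
- exact: is_cvg_cst.
- exact: is_cvg_cst.
- split=> [x _|]; first exact: derivableB.
  by apply: cvg_at_right_filter; apply: cvgB; [exact: cvg_cst | exact: cvg_id].
- have -> : (fun x : R => m * 2 - x) = (fun x => - (x - m * 2)).
    by apply/funext => x; rewrite opprB.
  exact/cvgNrNy/cvg_addrr.
- exact/(@continuous_subspaceT R^o R^o)/continuous_normal_pdf.
- by move=> x _; exact: normal_pdf_ge0.
apply: eq_integral => x _; congr EFin.
by rewrite !fctE opprK mulr1 normal_pdf_reflect.
Qed.

Lemma normal_prob_itvNyo : normal_prob m s `]-oo, m[ = (1 / 2)%:E.
Proof.
have halves_eq : normal_prob m s `]-oo, m[ = normal_prob m s `[m, +oo[.
  rewrite -normal_prob_itvNyc_itvcy /normal_prob.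
  apply: integral_itv_bndo_bndc; apply/measurable_EFinP/measurable_funTS.
  exact: measurable_normal_pdf.
have halves_sum : (normal_prob m s `]-oo, m[ + normal_prob m s `[m, +oo[ = 1)%E.
  rewrite -measureU //= -setCitvl ?setICr //.
  by rewrite setUv probability_setT.
have fin : normal_prob m s `]-oo, m[ \is a fin_num.
  by rewrite ge0_fin_numE ?measure_ge0 // (le_lt_trans (probability_le1 _ _)) ?ltry.
move: halves_sum; rewrite -halves_eq -(fineK fin) -EFinD => -[sum1].
by congr EFin; lra.
Qed.

Lemma normal_prob_lt_ge_half tau : m <= tau ->
  ((1 / 2)%:E <= normal_prob m s [set x | (x < tau)%R]%classic)%E.
Proof.
move=> le_m_tau; rewrite -normal_prob_itvNyo.
apply: le_measure; rewrite ?inE //=; first by rewrite -set_itvNyo.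
by move=> x /=; rewrite in_itv /= => /lt_le_trans; apply.
Qed.

End normal_half.

Section ctsg_sample_law.
Context {R : realType} {N : nat}.
Implicit Types (r : 'I_N -> R) (S : nat -> {set 'I_N}) (a : 'I_N).

Lemma emp_mean_played r S a t : (0 < nplays S a t)%N -> emp_mean r S a t = r a.
Proof.
move=> played; rewrite /emp_mean.
have -> : \sum_(1 <= s < t | a \in S s) r a = (nplays S a t)%:R * r a.
  rewrite big_mkcond /nplays natr_sum mulr_suml.
  by apply: eq_bigr => s _; case: (a \in S s); rewrite ?mul1r ?mul0r.
by rewrite mulrC mulKf // pnatr_eq0 -lt0n.
Qed.

Lemma nplays_gt0_round S a t : (0 < nplays S a t)%N -> (1 < t)%N.
Proof. by apply: contraTT; rewrite -leqNgt => t_le1; rewrite /nplays big_geq. Qed.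

Lemma ctsg_sample_law_lt_ge_half m r S a t tau :
  (0 < m)%N -> (0 < nplays S a t)%N -> r a <= tau ->
  ((1 / 2)%:E <= ctsg_sample_law m r S a t [set x | (x < tau)%R]%classic)%E.
Proof.
move=> m_gt0 played le_tau; apply: normal_prob_lt_ge_half.
  rewrite gt_eqF // sqrtr_gt0 divr_gt0 ?ltr0n // mulr_gt0 ?ltr0n //.
  by rewrite ln_gt0 // ltr1n; exact: nplays_gt0_round played.
by rewrite emp_mean_played.
Qed.

End ctsg_sample_law.

Lemma gapDelta_gt0 (R : realType) N T : (0 < N)%N -> (1 < T)%N -> 0 < gapDelta R N T.
Proof.
move=> N_gt0 T_gt1; rewrite mulr_gt0 // sqrtr_gt0 divr_gt0 ?ltr0n ?(ltnW T_gt1) //.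
by rewrite mulr_gt0 ?ltr0n // ln_gt0 // ltr1n.
Qed.

Lemma Hthr_gt0 (R : realType) m T (D : R) :
  (0 < m)%N -> (1 < T)%N -> D != 0 -> (0 < Hthr m T D)%R.
Proof.
move=> m_gt0 T_gt1 D_neq0.
by rewrite ceil_gt0 divr_gt0 ?exprn_even_gt0 // !mulr_gt0 ?ltr0n // ln_gt0 // ltr1n.
Qed.

Theorem lemma8 (R : realType) (N m T : nat) (G : {set 'I_N})
  (hm : (1 <= m)%N) (hN : (400 * m <= N)%N) (hG : #|G| = m)
  (hT2 : (2 <= T)%N)
  (hT : 16 / 25 * N%:R * ln (T%:R : R) < T%:R)
  (S : nat -> {set 'I_N}) (hS : forall s, #|S s| = m)
  (t : nat) (ht1 : (1 <= t)%N) (htT : (t <= T)%N)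
  (a : 'I_N) (haG : a \in G)
  (haH : (Hthr m T (gapDelta R N T) <= (nplays S a t)%:Z)%R) :
  ((1 / 2 : R)%:E <=
   ctsg_sample_law m (reward G (gapDelta R N T)) S a t
     ([set x : R | (x < gapDelta R N T + gapDelta R N T / 4)%R]%classic))%E.
Proof.
set D := gapDelta R N T in haH *.
have D_gt0 : 0 < D by apply: gapDelta_gt0; lia.
have played : (0 < nplays S a t)%N.
  by rewrite -ltz_nat (lt_le_trans _ haH) // Hthr_gt0 // gt_eqF.
apply: ctsg_sample_law_lt_ge_half => //.
by rewrite /reward haG lerDl divr_ge0 // ltW.
Qed.
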